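(* Let $\Sigma$ be a flag complex on $[n]$ and let $\ell$ be a positive integer. Let $\Delta$ and $\Delta'$ be the simplicial complexes (collections of subsets of $[n]$ closed under taking subsets) defined by $I_\Delta=I(\overline{\mathrm{skel}_\Sigma(\ell)})$ and $I_{\Delta'}=I(\overline{\mathrm{skel}_\Sigma(1)})$. If $I_{\Delta'}$ has linear quotients, then so does $I_\Delta$.
   Context: $S=K[x_1,\ldots,x_n]$ over a field $K$, $x_F=\prod_{i\in F}x_i$. For a simplicial complex $\Gamma$, $I_\Gamma$ (Stanley–Reisner ideal) is generated by all $x_F$ with $F\notin\Gamma$, and $I(\Gamma)$ (facet ideal) by the $x_F$ with $F$ a facet of $\Gamma$. $\Sigma$ is flag if all minimal nonfaces have two elements (the simplex counts as flag). For $k\geq1$, $\overline{\mathrm{skel}_\Sigma(k)}$ is the complex whose facets are the $(k+1)$-subsets of $[n]$ not in $\Sigma$. A monomial ideal has linear quotients if its minimal monomial generators can be ordered $f_1,\ldots,f_m$ so that for each $i>1$ the colon ideal $(f_1,\ldots,f_{i-1}):f_i$ is generated by variables. *)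

From mathcomp Require Import all_boot all_algebra.
From mathcomp Require Import mpoly.

Set Implicit Arguments.
Unset Strict Implicit.
Unset Printing Implicit Defensive.

Import GRing.Theory.
Local Open Scope ring_scope.

Section Defs.
Variables (K : fieldType) (n : nat).

(* Vertex set [n] is modelled by 'I_n; a collection of subsets is a {set {set 'I_n}}. *)
Definition simplicial_complex (G : {set {set 'I_n}}) : Prop :=
  forall F H : {set 'I_n}, F \in G -> H \subset F -> H \in G.

Definition is_flag (G : {set {set 'I_n}}) : Prop :=
  simplicial_complex G /\
  forall F : {set 'I_n}, F \notin G ->
    (forall H : {set 'I_n}, H \proper F -> H \in G) -> #|F| = 2.

Definition facets (G : {set {set 'I_n}}) : {set {set 'I_n}} :=
  [set F in G | [forall H, (H \in G) ==> ~~ (F \proper H)]].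

Definition skel_bar (Sigma : {set {set 'I_n}}) (k : nat) : {set {set 'I_n}} :=
  [set H : {set 'I_n} | [exists F : {set 'I_n}, [&& #|F| == k.+1, F \notin Sigma & H \subset F]]].

Definition xF (F : {set 'I_n}) : {mpoly K[n]} := \prod_(i in F) 'X_i.

Definition ideal_gen (gs : seq {mpoly K[n]}) : {mpoly K[n]} -> Prop :=
  fun p => exists cs : seq {mpoly K[n]}, p = \sum_(i < size gs) cs`_i * gs`_i.

Definition SR_ideal (G : {set {set 'I_n}}) : {mpoly K[n]} -> Prop :=
  ideal_gen [seq xF F | F in ~: G].

Definition facet_ideal (G : {set {set 'I_n}}) : {mpoly K[n]} -> Prop :=
  ideal_gen [seq xF F | F in facets G].

Definition is_monomial (p : {mpoly K[n]}) : Prop :=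
  exists m : 'X_{1..n}, p = 'X_[m].

Definition pdvd (q p : {mpoly K[n]}) : Prop := exists r, p = r * q.

Definition colon (gs : seq {mpoly K[n]}) (f : {mpoly K[n]}) : {mpoly K[n]} -> Prop :=
  fun p => ideal_gen gs (p * f).

Definition gen_by_variables (J : {mpoly K[n]} -> Prop) : Prop :=
  exists vs : seq 'I_n, forall p, J p <-> ideal_gen [seq 'X_v | v <- vs] p.

Definition linear_quotients (I : {mpoly K[n]} -> Prop) : Prop :=
  exists fs : seq {mpoly K[n]},
    [/\ uniq fs,
        forall i, (i < size fs)%N -> is_monomial fs`_i,
        forall i j, (i < size fs)%N -> (j < size fs)%N -> i != j -> ~ pdvd fs`_j fs`_i,
        forall p, I p <-> ideal_gen fs p &
        forall i, (0 < i < size fs)%N -> gen_by_variables (colon (take i fs) fs`_i)].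

End Defs.
Arguments SR_ideal K {n} G.
Arguments facet_ideal K {n} G.
Arguments linear_quotients {K n} I.

(* The facets of skel_bar Sigma k are the (k+1)-subsets not in Sigma, and since
   Sigma is flag a set is a nonface iff it contains a nonedge.  For squarefree
   monomials x_F of one degree, an order F_1, ..., F_m has linear quotients iff it
   is an exchange order: for j < i some v in F_j \ F_i and t in F_i make
   v |: (F_i :\ t) an earlier generator (the colon ideal is then generated by
   these x_v).  Given an exchange order e_1, ..., e_r of the nonedges, sort the
   (l+1)-nonfaces F by the least k with e_k contained in F, then by the sum of
   the elements of F.  If y precedes w and their first nonedges differ, the
   exchange property of the e's supplies the swap; if they agree, swapping an
   element of w \ y for a smaller element of y \ w lowers the sum. *)

From Pilot Require Import Defs.
From mathcomp Require Import all_boot all_algebra.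
From mathcomp Require Import mpoly.
From mathcomp Require Import zify.

Set Implicit Arguments.
Unset Strict Implicit.
Unset Printing Implicit Defensive.

Import GRing.Theory.
Local Open Scope ring_scope.

Section MonomialIdeals.
Variables (K : fieldType) (n : nat).
Local Notation P := {mpoly K[n]}.
Implicit Types (gs hs : seq P) (p q r : P).

Lemma ideal_gen0 gs : ideal_gen gs 0.
Proof. by exists [::]; rewrite big1 // => i _; rewrite nth_nil mul0r. Qed.

Lemma ideal_genD gs p q : ideal_gen gs p -> ideal_gen gs q -> ideal_gen gs (p + q).
Proof.
move=> [cs ->] [ds ->]; exists [seq cs`_i + ds`_i | i <- iota 0 (size gs)].
rewrite -big_split /=; apply: eq_bigr => i _.
by rewrite (nth_map 0%N) ?size_iota // nth_iota // mulrDl.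
Qed.

Lemma ideal_genMl gs r p : ideal_gen gs p -> ideal_gen gs (r * p).
Proof.
move=> [cs ->]; exists [seq r * cs`_i | i <- iota 0 (size gs)].
rewrite mulr_sumr; apply: eq_bigr => i _.
by rewrite (nth_map 0%N) ?size_iota // nth_iota // mulrA.
Qed.

Lemma ideal_gen_mem gs g : g \in gs -> ideal_gen gs g.
Proof.
move=> g_gs; have ig : (index g gs < size gs)%N by rewrite index_mem.
exists [seq (i == index g gs)%:R | i <- iota 0 (size gs)].
rewrite (bigD1 (Ordinal ig)) //= big1 => [|j /eqP ji].
  by rewrite (nth_map 0%N) ?size_iota // nth_iota // eqxx mul1r nth_index ?addr0.
rewrite (nth_map 0%N) ?size_iota // nth_iota //.
by case: eqP => [e | _]; [case: ji; apply: val_inj | rewrite mul0r].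
Qed.

Lemma ideal_gen_trans gs hs p : (forall g, g \in gs -> ideal_gen hs g) ->
  ideal_gen gs p -> ideal_gen hs p.
Proof.
move=> gs_hs [cs ->]; apply: big_ind => [|x y|i _]; first exact: ideal_gen0.
  exact: ideal_genD.
by apply: ideal_genMl; apply/gs_hs/mem_nth.
Qed.

Lemma ideal_gen_eq_mem gs hs p : gs =i hs -> ideal_gen gs p <-> ideal_gen hs p.
Proof.
by move=> e; split; apply: ideal_gen_trans => g g_in; apply: ideal_gen_mem;
  rewrite ?e // -e.
Qed.

Lemma ideal_gen_colon gs hs q p : (forall g, g \in gs -> colon hs q g) ->
  ideal_gen gs p -> colon hs q p.
Proof.
move=> gs_hs [cs ->]; rewrite /colon mulr_suml.
apply: big_ind => [|x y|i _]; first exact: ideal_gen0.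
  exact: ideal_genD.
by rewrite -mulrA; apply: ideal_genMl; apply/gs_hs/mem_nth.
Qed.

Lemma ideal_gen_msupp gs p :
  (forall m, m \in msupp p -> ideal_gen gs 'X_[m]) -> ideal_gen gs p.
Proof.
move=> hp; rewrite (mpolyE p) big_seq.
apply: big_ind => [|x y|m /hp]; first exact: ideal_gen0.
  exact: ideal_genD.
by rewrite -mul_mpolyC; apply: ideal_genMl.
Qed.

Lemma mcoeffMX_nle p a z : ~~ (a <= z)%MM -> (p * 'X_[a])@_z = 0.
Proof.
move=> az; apply/eqP; rewrite mcoeff_eq0 (perm_mem (msuppMX p a)).
by apply: contra az => /mapP[m _ ->]; rewrite lem_addr.
Qed.

Lemma ideal_gen_monomials_msupp (I : eqType) (xs : seq I) (f : I -> 'X_{1..n}) q z :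
  ideal_gen [seq 'X_[f x] | x <- xs] q -> z \in msupp q ->
  exists2 x, x \in xs & (f x <= z)%MM.
Proof.
move=> [cs ->] z_q; suff /hasP[x] : has (fun x => f x <= z)%MM xs by exists x.
apply: contraTT z_q => /hasPn xs_z; rewrite mcoeff_msupp negbK raddf_sum big1 // => i _.
have /mapP[x x_xs ->] := mem_nth 0 (ltn_ord i).
exact/mcoeffMX_nle/xs_z.
Qed.

Lemma monomial_in_ideal_gen (I : eqType) (xs : seq I) (f : I -> 'X_{1..n}) m :
  ideal_gen [seq 'X_[f x] | x <- xs] ('X_[m] : P) -> exists2 x, x \in xs & (f x <= m)%MM.
Proof. by move/ideal_gen_monomials_msupp; apply; rewrite msuppX mem_seq1. Qed.

Lemma mpolyX_inj : injective (fun m : 'X_{1..n} => 'X_[m] : P).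
Proof. by move=> a b e; rewrite -(mleadXm K a) /= e mleadXm. Qed.

End MonomialIdeals.

Lemma lepm_anti (n : nat) (a b : 'X_{1..n}) : (a <= b)%MM -> (b <= a)%MM -> a = b.
Proof.
move=> /mnm_lepP ab /mnm_lepP ba; apply/mnmP => i.
by apply/eqP; rewrite eqn_leq ab ba.
Qed.

Section SquarefreeMonomials.
Variables (K : fieldType) (n : nat).
Local Notation P := {mpoly K[n]}.
Local Notation xF := (@xF K n).
Implicit Types (A B F w : {set 'I_n}) (E : seq {set 'I_n}).

Definition mset F : 'X_{1..n} := [multinom ((i \in F) : nat) | i < n].

Lemma msetE F i : mset F i = (i \in F).
Proof. by rewrite mnmE. Qed.

Lemma xF_mset F : xF F = 'X_[mset F].
Proof.
rewrite /Defs.xF mprodXE; congr 'X_[_]; apply/mnmP => i.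
rewrite mnm_sumE msetE (eq_bigr (fun j => nat_of_bool (j == i))) => [|j _]; last first.
  by rewrite mnm1E.
case: (boolP (i \in F)) => [iF | iNF].
  by rewrite (bigD1 i) //= eqxx big1 // => j /andP[_ /negbTE ->].
by rewrite big1 // => j jF; case: eqP jF iNF => // -> ->.
Qed.

Lemma map_xF_mset E : map xF E = [seq 'X_[mset F] | F <- E].
Proof. by apply: eq_map => F; rewrite xF_mset. Qed.

Lemma lem_mset A B : (mset A <= mset B)%MM = (A \subset B).
Proof.
apply/mnm_lepP/subsetP => [AB i iA | AB i]; last first.
  by rewrite !msetE; case: (boolP (i \in A)) => // /AB ->.
by have := AB i; rewrite !msetE iA; case: (i \in B).
Qed.

Lemma xF_inj : injective xF.
Proof.
move=> A B; rewrite !xF_mset => /mpolyX_inj eAB.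
by apply/eqP; rewrite eqEsubset -!lem_mset eAB lepm_refl.
Qed.

Lemma xF_set1 v : xF [set v] = 'X_v.
Proof. by rewrite /Defs.xF big_set1. Qed.

Lemma xF_setU1 v A : v \notin A -> xF (v |: A) = 'X_v * xF A.
Proof. by move=> vA; rewrite /Defs.xF big_setU1. Qed.

Lemma xF_exchange v t w : v \notin w -> t \in w ->
  'X_v * xF w = 'X_t * xF (v |: (w :\ t)).
Proof.
move=> vw tw; have vwt : v \notin w :\ t by rewrite !inE negb_and vw orbT.
by rewrite -{1}(setD1K tw) !xF_setU1 ?setD11 // mulrCA.
Qed.

Lemma xF_setDM A B : xF (A :\: B) * xF B = xF (A :|: B).
Proof.
rewrite !xF_mset -mpolyXD; congr 'X_[_]; apply/mnmP => i.
by rewrite mnmDE !msetE !inE; case: (i \in A); case: (i \in B).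
Qed.

Lemma xF_in_ideal_gen E F : ideal_gen (map xF E) (xF F) -> exists2 e, e \in E & e \subset F.
Proof.
rewrite map_xF_mset xF_mset => /monomial_in_ideal_gen[e eE].
by rewrite lem_mset; exists e.
Qed.

Lemma xF_in_ideal_vars (vs : seq 'I_n) F :
  ideal_gen [seq 'X_v | v <- vs] (xF F) -> exists2 v, v \in vs & v \in F.
Proof.
have -> : [seq 'X_v | v <- vs] = map xF [seq [set v] | v <- vs] :> seq P.
  by rewrite -map_comp; apply: eq_map => v; rewrite /= xF_set1.
by case/xF_in_ideal_gen => _ /mapP[v vs_v ->]; rewrite sub1set; exists v.
Qed.

Lemma xF_dvd A B : pdvd (xF B) (xF A) -> B \subset A.
Proof.
move=> [r eA]; have : ideal_gen [:: xF B] (xF A).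
  by rewrite eA; apply/ideal_genMl/ideal_gen_mem/mem_head.
by case/(xF_in_ideal_gen (E := [:: B])) => e; rewrite mem_seq1 => /eqP ->.
Qed.

End SquarefreeMonomials.

Lemma seq_preimage (T U : eqType) (f : T -> U) (P : pred T) (ys : seq U) :
  (forall y, y \in ys -> exists2 x, P x & y = f x) -> exists2 xs, all P xs & map f xs = ys.
Proof.
elim: ys => [|y ys IHys] ys_f; first by exists [::].
have [x Px ->] := ys_f y (mem_head _ _).
have [|xs Pxs <-] := IHys; first by move=> z z_ys; apply/ys_f/mem_behead.
by exists (x :: xs); rewrite /= ?Px.
Qed.

Section SortedByKey.
Variables (T : eqType) (key : T -> nat) (x0 : T).

Lemma nth_notin_take (s : seq T) i : uniq s -> (i < size s)%N -> nth x0 s i \notin take i s.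
Proof.
rewrite -{1}(cat_take_drop i s) cat_uniq => /and3P[_ /hasPn take_drop _] i_s.
by apply: take_drop; rewrite (drop_nth x0 i_s) mem_head.
Qed.

Let key_le_trans : transitive (relpre key leq).
Proof. by move=> y x z; apply: leq_trans. Qed.

Let key_le_refl : reflexive (relpre key leq).
Proof. by move=> x; apply: leqnn. Qed.

Variables (s : seq T).
Hypothesis s_sorted : sorted (relpre key leq) s.

Lemma key_take_le i y : (i < size s)%N -> y \in take i s -> (key y <= key (nth x0 s i))%N.
Proof.
move=> i_s /(nthP x0)[j]; rewrite size_take i_s => ji <-; rewrite nth_take //.
apply: (sorted_leq_nth key_le_trans key_le_refl) => //; last exact: ltnW.
exact: ltn_trans i_s.
Qed.

Lemma key_take_lt i y : (i < size s)%N -> y \in s -> (key y < key (nth x0 s i))%N ->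
  y \in take i s.
Proof.
move=> i_s /(nthP x0)[j j_s <-] lt_key; have ji : (j < i)%N.
  rewrite ltnNge; apply: contraTN lt_key => ij; rewrite -leqNgt.
  exact: (sorted_leq_nth key_le_trans key_le_refl).
by rewrite -(nth_take x0 ji) mem_nth // size_take i_s.
Qed.

End SortedByKey.

Section NonfaceCombinatorics.
Variable n : nat.
Implicit Types (Sigma : {set {set 'I_n}}) (F w y : {set 'I_n}).

Definition nonfaces Sigma k := [set F : {set 'I_n} | (#|F| == k) && (F \notin Sigma)].

Lemma facets_skel_bar Sigma k : facets (skel_bar Sigma k) = nonfaces Sigma k.+1.
Proof.
have skelP (F G : {set 'I_n}) :
    #|G| = k.+1 -> G \notin Sigma -> F \subset G -> F \in skel_bar Sigma k.
  by move=> cardG GS FG; rewrite inE; apply/existsP; exists G; rewrite cardG eqxx GS.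
apply/setP => F; rewrite /facets !inE; apply/andP/andP => [[] | [/eqP cardF FS]].
  case/existsP=> G /and3P[/eqP cardG GS FG] /forallP/(_ G).
  rewrite (skelP G G) ?subxx //= properEneq FG andbT negbK => /eqP ->.
  by rewrite cardG.
split; first by apply/existsP; exists F; rewrite cardF eqxx FS subxx.
apply/forallP => H; rewrite inE; apply/implyP => /existsP[G /and3P[/eqP cardG _ HG]].
apply/negP => /proper_card; rewrite cardF ltnNge.
by rewrite -cardG subset_leq_card.
Qed.

Lemma flag_nonface_has_nonedge Sigma F : is_flag Sigma -> F \notin Sigma ->
  exists2 e, e \in nonfaces Sigma 2 & e \subset F.
Proof.
move=> [_ flag] FS.
have [|G /andP[GF GS] Gmin] :=
  @arg_minnP _ F (fun G => (G \subset F) && (G \notin Sigma)) (fun G => #|G|).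
  by rewrite subxx FS.
exists G => //; rewrite inE GS andbT; apply/eqP/flag => // H HG.
apply: contraT => HS; have := Gmin H; rewrite HS (subset_trans (proper_sub HG) GF).
by move=> /(_ isT); rewrite leqNgt proper_card.
Qed.

Lemma card_setU1D1 v t w : v \notin w -> t \in w -> #|v |: (w :\ t)| = #|w|.
Proof.
move=> vw tw; rewrite cardsU1 inE negb_and vw orbT (cardsD1 t w) tw.
by rewrite add1n.
Qed.

Lemma subset_setU1_exchange v w y : v \notin w -> y \subset v |: w ->
  #|y| = #|w| -> y != w -> exists2 t, t \in w & y = v |: (w :\ t).
Proof.
move=> vw yvw cardy yw; have [t tw ty] : exists2 t, t \in w & t \notin y.
  apply/subsetPn; apply: contra yw => wy.
  by rewrite eq_sym eqEcard wy cardy leqnn.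
exists t => //; apply/eqP; rewrite eqEcard card_setU1D1 // cardy leqnn andbT.
apply/subsetP => x xy; have := subsetP yvw x xy; rewrite !inE.
by case: eqP => //= _ ->; rewrite andbT; apply: contraNneq ty => <-.
Qed.

Definition weight w := (\sum_(i in w) (i : nat))%N.

Definition weight_bound := (n * n).+1.

Lemma weight_lt w : (weight w < weight_bound)%N.
Proof.
rewrite ltnS; apply: (@leq_trans (\sum_(i in w) n)%N).
  by apply: leq_sum => i _; apply: ltnW.
rewrite sum_nat_const leq_mul2r; apply/orP; right.
by rewrite -[X in (_ <= X)%N](card_ord n) max_card.
Qed.

Lemma weight_setU1D1 v t w : v \notin w -> t \in w ->
  (weight (v |: (w :\ t)) + t = weight w + v)%N.
Proof.
move=> vw tw; rewrite /weight big_setU1 /=; last by rewrite inE negb_and vw orbT.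
by rewrite (big_setD1 t tw) /=; lia.
Qed.

Lemma weight_exchange y w : #|y| = #|w| -> y != w -> (weight y <= weight w)%N ->
  exists v t, [/\ v \in y, v \notin w, t \in w, t \notin y & (v < t)%N].
Proof.
move=> cardyw yw weightyw; set A := y :\: w; set B := w :\: y.
have cardAB : #|A| = #|B|.
  by move: cardyw; rewrite -(cardsID w y) -(cardsID y w) setIC -/A -/B; lia.
have weightAB : (weight A <= weight B)%N.
  move: weightyw; rewrite /weight (@big_setID _ _ _ _ y w) (@big_setID _ _ _ _ w y) /=.
  by rewrite setIC -/A -/B leq_add2l.
have A0 : (0 < #|A|)%N.
  rewrite lt0n cards_eq0 setD_eq0; apply: contra yw => yw.
  by rewrite eqEcard yw cardyw leqnn.
have [t0 t0B] : exists t0, t0 \in B by apply/card_gt0P; rewrite -cardAB.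
case: (arg_maxnP val t0B) => tm tmB tm_max; have {}tmB : tm \in B := tmB.
suff /exists_inP[v] : [exists v in A, (v < tm)%N].
  move: tmB; rewrite /A /B !inE => /andP[tmy tmw] /andP[vw vy] vtm.
  by exists v, tm.
apply: contraLR weightAB; rewrite negb_exists_in -ltnNge => /forall_inP tm_le.
have tm_lt v : v \in A -> (tm < v)%N.
  move=> vA; rewrite ltn_neqAle leqNgt tm_le // andbT.
  apply: contraTneq vA => /val_inj <-.
  by move: tmB; rewrite /A /B !inE => /andP[/negbTE -> _]; rewrite andbF.
apply: (@leq_ltn_trans (#|B| * tm)%N).
  by rewrite -sum_nat_const; apply: leq_sum => t; apply: tm_max.
apply: (@leq_trans (#|A| * tm.+1)%N); first by rewrite cardAB ltn_pmul2l // -cardAB.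
by rewrite -sum_nat_const; apply: leq_sum => v; apply: tm_lt.
Qed.

Definition exchange_order (s : seq {set 'I_n}) : Prop :=
  forall i y, (i < size s)%N -> y \in take i s ->
    exists v t, [/\ v \in y, v \notin nth set0 s i, t \in nth set0 s i &
                    v |: (nth set0 s i :\ t) \in take i s].

End NonfaceCombinatorics.

Section NonfaceOrder.
Variables (n : nat) (Sigma : {set {set 'I_n}}) (us : seq {set 'I_n}).
Hypothesis Sigma_complex : simplicial_complex Sigma.
Hypothesis us_nonfaces : forall u, u \in us -> u \notin Sigma.
Hypothesis us_cover :
  forall F, F \notin Sigma -> has (fun u : {set 'I_n} => u \subset F) us.
Hypothesis us_exchange : exchange_order us.
Implicit Types (w y z : {set 'I_n}).

Definition cover_index w := find (fun u : {set 'I_n} => u \subset w) us.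
Local Notation cover w := (nth set0 us (cover_index w)).

(* Lexicographic order on (cover_index w, weight w), packed into one number
   using weight w < weight_bound. *)
Definition nonface_key w := (cover_index w * weight_bound n + weight w)%N.

Definition nonface_order d := sort (relpre nonface_key leq) (enum (nonfaces Sigma d)).

Lemma cover_index_lt w : w \notin Sigma -> (cover_index w < size us)%N.
Proof. by move/us_cover; rewrite has_find. Qed.

Lemma cover_subset w : w \notin Sigma -> cover w \subset w.
Proof. by move/us_cover/(nth_find set0). Qed.

Lemma cover_index_take i y z : y \in take i us -> y \subset z -> (cover_index z < i)%N.
Proof.
case/(nthP set0) => k; rewrite size_take_min ltn_min => /andP[ki ku] <-.
rewrite nth_take // => yz; apply: leq_ltn_trans ki; rewrite leqNgt.
by apply: contraL yz => /(before_find set0) ->.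
Qed.

Lemma nonface_key_lt_cover y z : (cover_index y < cover_index z)%N ->
  (nonface_key y < nonface_key z)%N.
Proof.
move=> yz; have := weight_lt y; rewrite /nonface_key.
have : (cover_index y * weight_bound n + weight_bound n <=
        cover_index z * weight_bound n)%N by rewrite -mulSnr leq_mul2r yz orbT.
lia.
Qed.

Lemma nonface_key_lt_weight y z : (cover_index y <= cover_index z)%N ->
  (weight y < weight z)%N -> (nonface_key y < nonface_key z)%N.
Proof.
move=> yz; rewrite /nonface_key.
have : (cover_index y * weight_bound n <= cover_index z * weight_bound n)%N.
  by rewrite leq_mul2r yz orbT.
lia.
Qed.

Lemma superset_nonface u z : u \in us -> u \subset z -> z \notin Sigma.
Proof. by move=> /us_nonfaces uS uz; apply: contra uS => zS; apply: Sigma_complex uz. Qed.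

Lemma cover_index_le y z : (nonface_key y <= nonface_key z)%N ->
  (cover_index y <= cover_index z)%N.
Proof. by apply: contraTT; rewrite -!ltnNge => /nonface_key_lt_cover. Qed.

Section Exchange.
Variables (w y : {set 'I_n}).
Hypotheses (wS : w \notin Sigma) (yS : y \notin Sigma).

Lemma exchange_same_cover : #|y| = #|w| -> y != w ->
  cover_index y = cover_index w -> (weight y <= weight w)%N ->
  exists v t, [/\ v \in y, v \notin w, t \in w, v |: (w :\ t) \notin Sigma &
    (nonface_key (v |: (w :\ t)) < nonface_key w)%N].
Proof.
move=> cardyw yw same_cover weightyw.
have [v [t [vy vw tw ty vt]]] := weight_exchange cardyw yw weightyw.
have cover_sub : cover w \subset v |: (w :\ t).
  apply/subsetP => x xw; rewrite !inE (subsetP (cover_subset wS) x xw) andbT.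
  apply/orP; right; apply: contraNneq ty => <-.
  by rewrite -same_cover in xw; apply: (subsetP (cover_subset yS)).
exists v, t; split => //.
  exact: superset_nonface (mem_nth set0 (cover_index_lt wS)) cover_sub.
apply: nonface_key_lt_weight.
  by rewrite leqNgt; apply/negP => /(before_find set0); rewrite cover_sub.
by rewrite -(ltn_add2r t) weight_setU1D1 // ltn_add2l.
Qed.

Lemma exchange_smaller_cover : (cover_index y < cover_index w)%N ->
  exists v t, [/\ v \in y, v \notin w, t \in w, v |: (w :\ t) \notin Sigma &
    (nonface_key (v |: (w :\ t)) < nonface_key w)%N].
Proof.
move=> lt_cover; set i := cover_index w.
have i_us : (i < size us)%N := cover_index_lt wS.
have yi : cover y \in take i us.
  by rewrite -(nth_take set0 lt_cover) mem_nth // size_take i_us.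
have [v [t [vy vi ti ki]]] := us_exchange i_us yi.
have cover_wNsub : forall u, u \in take i us -> ~~ (u \subset w).
  by move=> u ui; apply/negP => /(cover_index_take ui); rewrite ltnn.
exists v, t; split.
- exact: (subsetP (cover_subset yS)).
- apply: contra (cover_wNsub _ ki) => vw.
  by rewrite subUset sub1set vw (subset_trans (subsetDl _ _) (cover_subset wS)).
- exact: (subsetP (cover_subset wS)).
- exact/(superset_nonface (mem_take ki))/setUS/setSD/cover_subset.
apply/nonface_key_lt_cover/(cover_index_take ki).
exact/setUS/setSD/cover_subset.
Qed.

Lemma nonface_exchange : #|y| = #|w| -> y != w -> (nonface_key y <= nonface_key w)%N ->
  exists v t, [/\ v \in y, v \notin w, t \in w, v |: (w :\ t) \notin Sigma &
    (nonface_key (v |: (w :\ t)) < nonface_key w)%N].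
Proof.
move=> cardyw yw key_yw; have := cover_index_le key_yw.
rewrite leq_eqVlt => /orP[/eqP same | ]; last exact: exchange_smaller_cover.
apply: exchange_same_cover => //.
by move: key_yw; rewrite /nonface_key same leq_add2l.
Qed.

End Exchange.

Lemma mem_nonface_order d z : (z \in nonface_order d) = (z \in nonfaces Sigma d).
Proof. by rewrite mem_sort mem_enum. Qed.

Lemma nonface_order_uniq d : uniq (nonface_order d).
Proof. by rewrite sort_uniq enum_uniq. Qed.

Lemma nonface_order_sorted d : sorted (relpre nonface_key leq) (nonface_order d).
Proof. by apply: sort_sorted => y z; apply: leq_total. Qed.

Lemma exchange_order_nonface_order d : exchange_order (nonface_order d).
Proof.
move=> i y i_s yi; set w := nth set0 _ i.
have := mem_nth set0 i_s; rewrite -/w mem_nonface_order inE => /andP[/eqP cardw wS].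
have := mem_take yi; rewrite mem_nonface_order inE => /andP[/eqP cardy yS].
have yw : y != w.
  by apply: contraTneq yi => ->; apply: nth_notin_take (nonface_order_uniq d) i_s.
have key_yw := key_take_le set0 (nonface_order_sorted d) i_s yi.
have [v [t [vy vw tw zS key_zw]]] :=
  nonface_exchange wS yS (etrans cardy (esym cardw)) yw key_yw.
exists v, t; split => //; apply: (key_take_lt (nonface_order_sorted d) i_s _ key_zw).
by rewrite mem_nonface_order inE card_setU1D1 // cardw eqxx.
Qed.

End NonfaceOrder.

Section SquarefreeLinearQuotients.
Variables (K : fieldType) (n : nat).
Local Notation P := {mpoly K[n]}.
Local Notation xF := (@xF K n).

Lemma linear_quotients_ext (I J : P -> Prop) :
  (forall p, I p <-> J p) -> linear_quotients I -> linear_quotients J.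
Proof.
move=> IJ [fs [fs_uniq fs_mono fs_min fs_gen fs_colon]].
by exists fs; split=> // p; rewrite -IJ.
Qed.

Section Construction.
Variables (s : seq {set 'I_n}) (c : nat).
Hypotheses (s_uniq : uniq s) (s_card : forall w, w \in s -> #|w| = c).
Hypothesis s_exchange : exchange_order s.

Definition exchange_vars i : seq 'I_n :=
  let w := nth set0 s i in
  [seq v <- enum 'I_n | (v \notin w) && [exists t in w, v |: (w :\ t) \in take i s]].

Lemma colon_exchange_vars i p : (i < size s)%N ->
  colon (take i (map xF s)) (xF (nth set0 s i)) p <->
  ideal_gen [seq 'X_v | v <- exchange_vars i] p.
Proof.
move=> i_s; rewrite -map_take; set w := nth set0 s i; split => [p_colon | ].
  apply: ideal_gen_msupp => m m_p.
  have : (mset w + m)%MM \in msupp (p * xF w).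
    by rewrite xF_mset mcoeff_msupp mcoeffMX -mcoeff_msupp.
  move: p_colon; rewrite /colon map_xF_mset => /ideal_gen_monomials_msupp H /H[y yi].
  have [v [t [vy vw tw zi]]] := s_exchange i_s yi.
  move=> /mnm_lepP/(_ v); rewrite mnmDE !msetE vy (negbTE vw) add0n => m_v.
  have vm : (U_(v) <= m)%MM by rewrite lep1mP -lt0n.
  rewrite -(submK vm) mpolyXD; apply/ideal_genMl/ideal_gen_mem/map_f.
  by rewrite mem_filter mem_enum vw andbT /=; apply/exists_inP; exists t.
apply: ideal_gen_colon => g /mapP[v]; rewrite mem_filter mem_enum andbT.
case/andP => vw /exists_inP[t tw zi] ->; rewrite /colon.
by rewrite (xF_exchange _ vw tw); apply/ideal_genMl/ideal_gen_mem/map_f.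
Qed.

Lemma linear_quotients_of_exchange_order : linear_quotients (ideal_gen (map xF s)).
Proof.
exists (map xF s); split => //; rewrite ?size_map.
- by rewrite (map_inj_uniq (@xF_inj K n)).
- by move=> i i_s; rewrite (nth_map set0) // xF_mset; exists (mset (nth set0 s i)).
- move=> i j i_s j_s ij; rewrite !(nth_map set0) // => /xF_dvd ji.
  have : nth set0 s j == nth set0 s i.
    by rewrite eqEcard ji !s_card ?mem_nth //=.
  by rewrite nth_uniq // eq_sym (negbTE ij).
move=> i /andP[_ i_s]; exists (exchange_vars i) => p.
by rewrite (nth_map set0) // colon_exchange_vars.
Qed.

End Construction.

Lemma monomial_antichain_generators (fs : seq P) (E : seq {set 'I_n}) :
  (forall i, (i < size fs)%N -> is_monomial fs`_i) ->
  (forall i j, (i < size fs)%N -> (j < size fs)%N -> i != j -> ~ pdvd fs`_j fs`_i) ->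
  (forall p, ideal_gen (map xF E) p <-> ideal_gen fs p) ->
  forall f, f \in fs -> exists2 e, e \in E & f = xF e.
Proof.
move=> fs_mono fs_min gen _ /(nthP 0)[i i_fs <-]; have [m fiE] := fs_mono i i_fs.
have fsE : [seq 'X_[mlead g] | g <- fs] = fs.
  rewrite -[RHS]map_id; apply/eq_in_map => _ /(nthP 0)[j j_fs <-].
  by have [mj ->] := fs_mono j j_fs; rewrite mleadXm.
have /monomial_in_ideal_gen[e eE em] : ideal_gen [seq 'X_[mset F] | F <- E] ('X_[m] : P).
  by rewrite -map_xF_mset gen -fiE; apply/ideal_gen_mem/mem_nth.
have /monomial_in_ideal_gen[_ /(nthP 0)[j j_fs <-] fj_e] :
    ideal_gen [seq 'X_[mlead g] | g <- fs] ('X_[mset e] : P).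
  by rewrite fsE -xF_mset -gen; apply/ideal_gen_mem/map_f.
have ji : j = i.
  case: (eqVneq j i) => // ji; case: (fs_min i j i_fs j_fs); first by rewrite eq_sym.
  have [mj fjE] := fs_mono j j_fs; exists 'X_[m - mj].
  rewrite fiE fjE -mpolyXD submK //; apply: lepm_trans em.
  by rewrite fjE mleadXm in fj_e.
exists e => //; move: fj_e; rewrite ji fiE mleadXm => me.
by rewrite xF_mset (lepm_anti em me).
Qed.

Section ColonByVariables.
Variables (s : seq {set 'I_n}) (c : nat).
Hypotheses (s_uniq : uniq s) (s_card : forall w, w \in s -> #|w| = c).

Lemma exchange_of_colon_vars i : (i < size s)%N ->
  gen_by_variables (colon (take i (map xF s)) (xF (nth set0 s i))) ->
  forall y, y \in take i s -> exists v t, [/\ v \in y, v \notin nth set0 s i,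
    t \in nth set0 s i & v |: (nth set0 s i :\ t) \in take i s].
Proof.
move=> i_s [vs colon_vs] y yi; rewrite -map_take in colon_vs.
have w_s := mem_nth set0 i_s; set w := nth set0 s i in w_s colon_vs *.
have : colon (map xF (take i s)) (xF w) (xF (y :\: w)).
  by rewrite /colon xF_setDM setUC -xF_setDM; apply/ideal_genMl/ideal_gen_mem/map_f.
case/colon_vs/xF_in_ideal_vars => v v_vs; rewrite inE => /andP[vw vy].
have : colon (map xF (take i s)) (xF w) 'X_v by apply/colon_vs/ideal_gen_mem/map_f.
rewrite /colon -xF_setU1 // => /xF_in_ideal_gen[z zi zvw].
have zw : z != w by apply: contraTneq zi => ->; apply: nth_notin_take.
have [|t tw zE] := subset_setU1_exchange vw zvw _ zw.
  by rewrite !s_card // (mem_take zi).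
by exists v, t; rewrite -zE.
Qed.

End ColonByVariables.

Lemma exchange_order_of_linear_quotients (E : {set {set 'I_n}}) c :
  (forall e, e \in E -> #|e| = c) -> linear_quotients (ideal_gen (map xF (enum E))) ->
  exists2 s, s =i E & exchange_order s.
Proof.
move=> E_card [fs [fs_uniq fs_mono fs_min fs_gen fs_colon]].
have [s sE fsE] := seq_preimage (monomial_antichain_generators fs_mono fs_min fs_gen).
have s_uniq : uniq s by rewrite -(map_inj_uniq (@xF_inj K n)) fsE.
have s_card e : e \in s -> #|e| = c by move/(allP sE); rewrite mem_enum; apply: E_card.
have s_E : s =i E.
  move=> e; apply/idP/idP => [/(allP sE) | eE]; first by rewrite mem_enum.
  have : ideal_gen (map xF s) (xF e).
    by rewrite fsE -fs_gen; apply/ideal_gen_mem/map_f; rewrite mem_enum.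
  case/xF_in_ideal_gen => u us ue.
  by have /eqP <- : u == e by rewrite eqEcard ue (s_card u us) E_card ?leqnn.
exists s => // i y i_s; case: i i_s => [|i] i_s; first by rewrite take0.
apply: (exchange_of_colon_vars s_uniq s_card) => //.
by have := fs_colon i.+1; rewrite -fsE size_map (nth_map set0) //; apply.
Qed.

End SquarefreeLinearQuotients.

Theorem corollary1p5 (K : fieldType) (n : nat) (Sigma : {set {set 'I_n}}) (l : nat)
    (Delta Delta' : {set {set 'I_n}}) :
  is_flag Sigma -> (0 < l)%N ->
  simplicial_complex Delta -> simplicial_complex Delta' ->
  (forall p, SR_ideal K Delta p <-> facet_ideal K (skel_bar Sigma l) p) ->
  (forall p, SR_ideal K Delta' p <-> facet_ideal K (skel_bar Sigma 1) p) ->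
  linear_quotients (SR_ideal K Delta') -> linear_quotients (SR_ideal K Delta).
Proof.
move=> Sigma_flag _ _ _ Delta_gen Delta'_gen Delta'_lq.
have skel_gen k p : facet_ideal K (skel_bar Sigma k) p <->
    ideal_gen (map (@xF K n) (enum (nonfaces Sigma k.+1))) p.
  by rewrite /facet_ideal facets_skel_bar.
have nonfaces_card k e : e \in nonfaces Sigma k -> #|e| = k by rewrite inE => /andP[/eqP].
have nonedges_lq : linear_quotients (ideal_gen (map (@xF K n) (enum (nonfaces Sigma 2)))).
  by apply: linear_quotients_ext Delta'_lq => p; rewrite Delta'_gen skel_gen.
have [us usE us_exchange] :=
  exchange_order_of_linear_quotients (nonfaces_card 2) nonedges_lq.
have us_nonfaces u : u \in us -> u \notin Sigma by rewrite usE inE => /andP[].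
have us_cover F : F \notin Sigma -> has (fun u : {set 'I_n} => u \subset F) us.
  case/(flag_nonface_has_nonedge Sigma_flag) => e; rewrite -usE => e_us eF.
  by apply/hasP; exists e.
have order_card w : w \in nonface_order Sigma us l.+1 -> #|w| = l.+1.
  by rewrite mem_nonface_order; apply: nonfaces_card.
have := linear_quotients_of_exchange_order K (nonface_order_uniq Sigma us l.+1) order_card
  (exchange_order_nonface_order Sigma_flag.1 us_nonfaces us_cover us_exchange (d := l.+1)).
apply: linear_quotients_ext => p; rewrite Delta_gen skel_gen; apply: ideal_gen_eq_mem.
by apply: eq_mem_map => F; rewrite mem_nonface_order mem_enum.
Qed.
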